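(* Let $\mathcal{C}$, $C_0=\{c_0\}$, $f$ and $r$ be as in the context. Fix $\lambda\in[0,1]$, a random trip-detail variable $X$ with distribution $P$, a real-valued measurable function $u(X)$, and a conditional distribution of the realized fare $p'\ge0$ given $X$ (all expectations below assumed finite). Let $V^*:\mathcal C\to\mathbb{R}$ and $V^*_c(p',C)$ satisfy, for all $C\in\mathcal C$ and $p'\ge0$, $$V^*_c(p',C)=\max_{c\in C}\{r(p',c)+V^*(f(C,c))\},$$ $$V^*(C)=V^*(f(C))+\lambda\,\mathbb{E}_X\Big[\max\Big(u(X)+\mathbb{E}_{p'\mid X}[V^*_c(p',C)]-V^*(f(C)),\,0\Big)-\max\big(u(X),0\big)\Big],\qquad V^*(C_0)=0.$$ For $C\in\mathcal C$ and a function $g$ of the fare, define $$\mathbb{E}_{x',p'\mid C}\big[I(x'=1)\,g(p')\big]:=\lambda\,\mathbb{E}_X\Big[I\Big(u(X)+\mathbb{E}_{p'\mid X}[V^*_c(p',C)]-V^*(f(C))\ge0\Big)\,\mathbb{E}_{p'\mid X}[g(p')]\Big]$$ (so for $C=C_0$ the indicator is $I(u(X)\ge0)$). Let $V^L,V^U:\mathcal C\to\mathbb{R}$ satisfy $V^L(C_0)=V^U(C_0)=0$ and, for all $C\in\mathcal C$, $$V^L(C)=V^L(f(C))+\mathbb{E}_{x',p'\mid C_0}\big[I(x'=1)\,(V^L_c(p',C)-V^L(f(C)))\big],\quad V^L_c(p',C)=\max_{c\in C}[r(p',c)+V^L(f(C,c))],$$ $$V^U(C)=V^U(f(C))+\mathbb{E}_{x',p'\mid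 C}\big[I(x'=1)\,(V^U_c(p',C)-V^U(f(C)))\big],\quad V^U_c(p',C)=\max_{c\in C}[r(p',c)+V^U(f(C,c))].$$ Then $V^L(C)\le V^*(C)\le V^U(C)$ for all $C\in\mathcal C$.
   Context: A coupon group is a triple $c=\langle v,T,n\rangle\in\mathbb{R}\times\mathbb{N}\times\mathbb{N}^+$ (face value $v$, remaining time to expiration $T$, number of coupons $n$). The default (zero-valued) group is $c_0=\langle 0,0,1\rangle$. A coupon set is a finite set of coupon groups containing $c_0$ in which no two groups have the same pair $(v,T)$; $\mathcal C$ is the set of all coupon sets and $C_0=\{c_0\}$. For a group, $f_c(\langle v,T,n\rangle)=\langle v,T-1,n\rangle$ if $v>0$, $n>0$ and $T\ge 1$, and $f_c(\langle v,T,n\rangle)=c_0$ otherwise. For $C\in\mathcal C$ and $c=\langle v,T,n\rangle\in C$, $f(C,c)=\{f_c(c'):c'\in C\setminus\{c\}\}\cup\{f_c(\langle v,T,n-1\rangle)\}$ and $f(C):=f(C,c_0)$. The redemption value is $r(p',\langle v,T,n\rangle)=\min(v,p')$ for a realized fare $p'\ge 0$. $I(\cdot)$ is the indicator function. $\mathbb{E}_X$ is expectation over $X\sim P$ and $\mathbb{E}_{p'\mid X}$ over the realized fare given $X$. Interpretation: $\lambda$ is the per-time-step probability of a trip demand, $u(X)$ the utility gain from choosing the target mobility service, $V^*$ the optimal (undiscounted) net value of a coupon set, and $x'$ the indicator that a trip is served by the target service in the time step under the optimal policy. *)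

From HB Require Import structures.
From mathcomp Require Import all_boot all_order all_algebra.
From mathcomp Require Import finmap.
From mathcomp Require Import all_classical all_reals all_analysis.
Set Implicit Arguments. Unset Strict Implicit. Unset Printing Implicit Defensive.
Import Order.TTheory GRing.Theory Num.Theory.
Local Open Scope ring_scope.
Local Open Scope fset_scope.

Section Coupons.
Variable R : realType.

(* a coupon group <v, T, n> is ((v, T), n) *)
Definition group := (R * nat * nat)%type.
Definition gv (c : group) : R := c.1.1.
Definition gT (c : group) : nat := c.1.2.
Definition gn (c : group) : nat := c.2.

Definition c0 : group := (0, 0%N, 1%N).

Definition is_cset (C : {fset group}) : Prop :=
  [/\ c0 \in C,
      (forall c, c \in C -> (0 < gn c)%N) &
      (forall c c', c \in C -> c' \in C -> c.1 = c'.1 -> c = c')].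

Definition C0 : {fset group} := [fset c0].

Definition fc (c : group) : group :=
  if (0 < gv c) && (0 < gn c)%N && (1 <= gT c)%N
  then (gv c, (gT c).-1, gn c) else c0.

Definition fCc (C : {fset group}) (c : group) : {fset group} :=
  [fset fc c' | c' in C `\ c] `|` [fset fc (gv c, gT c, (gn c).-1)].

Definition fC (C : {fset group}) : {fset group} := fCc C c0.

Definition rv (p : R) (c : group) : R := Num.min (gv c) p.

(* V_c(p', C) = max_{c in C} [ r(p',c) + V(f(C,c)) ]  (c0 \in C for coupon sets,
   so seeding the max with the c0 term does not change its value) *)
Definition Vc (V : {fset group} -> R) (p : R) (C : {fset group}) : R :=
  let seed := (rv p c0 + V (fCc C c0))%R in
  \big[Num.max/seed]_(c <- C) (rv p c + V (fCc C c))%R.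

End Coupons.

(* Induction along [C |-> f(C,c)], which is well founded since every group either
   loses a time step or collapses to [c0].  Given the bounds on all successors of [C],
   [V^L_c <= V*_c <= V^U_c] pointwise, by monotonicity of the max.  Each of the three
   recursions has the form [V(C) = V(f(C)) + lam E[gain]]; the gain of [V*] decides on
   the trip optimally, whereas [V^L] uses the rule "take iff [u >= 0]" of [C0], and [V^U]
   uses the rule of [V*] with its own larger continuation values.  This yields
   pointwise gain comparisons up to the constant [V(f(C))] differences, which
   [0 <= lam <= 1] absorbs. *)

From HB Require Import structures.
From mathcomp Require Import all_boot all_order all_algebra.
From mathcomp Require Import finmap.
From mathcomp Require Import all_classical all_reals all_analysis.
From mathcomp Require Import lra zify.

Set Implicit Arguments. Unset Strict Implicit. Unset Printing Implicit Defensive.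
Import Order.TTheory GRing.Theory Num.Theory.
Local Open Scope ring_scope.

Section CouponSets.
Variable R : realType.
Local Open Scope fset_scope.
Implicit Types (c x y : group R) (C S : {fset group R}).

Definition redeem c : group R := (gv c, gT c, (gn c).-1).

Lemma fCcE C c : fCc C c = [fset fc x | x in C `\ c `|` [fset redeem c]].
Proof. by rewrite imfsetU imfset_fset1. Qed.

Lemma fc_c0 x : gv x = 0 -> fc x = c0 R.
Proof. by rewrite /fc => ->; rewrite ltxx. Qed.

Lemma fcP x : fc x = c0 R \/
  [/\ 0 < gv x, (0 < gT x)%N, (0 < gn x)%N & fc x = (gv x, (gT x).-1, gn x)].
Proof. by rewrite /fc; case: ifP => [/andP[/andP[]]|]; [right|left]. Qed.

Lemma fc_gn_gt0 x : (0 < gn (fc x))%N.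
Proof. by case: (fcP x) => [->|[_ _ ? ->]]. Qed.

Lemma fc_key x y : (fc x).1 = (fc y).1 -> x.1 = y.1 \/ fc x = fc y.
Proof.
case: (fcP x) => [->|[vx tx _ ->]]; case: (fcP y) => [->|[vy ty _ ->]] /=.
- by right.
- by case=> v0; move: vy; rewrite -v0 ltxx.
- by case=> v0; move: vx; rewrite v0 ltxx.
- case=> ev eT; left; move: ev tx ty eT; rewrite /gv /gT.
  by case: x y {vx vy} => [[? ?] ?] [[? ?] ?] /= -> *; congr pair; lia.
Qed.

Definition key_uniq S := {in S &, forall x y, x.1 = y.1 -> x = y}.

Lemma key_uniq_fc S : key_uniq S -> key_uniq [fset fc x | x in S].
Proof.
move=> uS _ _ /imfsetP[x /= xS ->] /imfsetP[y /= yS ->] /fc_key[|//].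
by move/(uS _ _ xS yS) ->.
Qed.

Lemma key_uniq_redeem C c :
  key_uniq C -> c \in C -> key_uniq (C `\ c `|` [fset redeem c]).
Proof.
move=> uC cC; have redeem_new x : x != c -> x \in C -> x.1 != (redeem c).1.
  by move=> + xC; apply: contra => /eqP xk; rewrite (uC _ _ xC cC) // xk; case: (c) => [[]].
move=> x y; rewrite !inE => /orP[/andP[xc xC]|/eqP->] /orP[/andP[yc yC]|/eqP->] // k.
- exact: uC.
- by move: (redeem_new _ xc xC); rewrite k eqxx.
- by move: (redeem_new _ yc yC); rewrite k eqxx.
Qed.

Lemma c0_in_fCc C c : c0 R \in C -> c0 R \in fCc C c.
Proof.
move=> c0C; rewrite fCcE; have [->|cc0] := eqVneq c (c0 R).
  by apply/imfsetP; exists (redeem (c0 R)); rewrite ?inE ?eqxx ?orbT ?fc_c0.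
by apply/imfsetP; exists (c0 R); rewrite ?inE ?c0C 1?eq_sym ?cc0 ?fc_c0.
Qed.

Lemma cset_fCc C c : is_cset C -> c \in C -> is_cset (fCc C c).
Proof.
case=> c0C _ uC cC; split; first exact: c0_in_fCc.
  by move=> y; rewrite fCcE => /imfsetP[x _ ->]; apply: fc_gn_gt0.
by rewrite fCcE; apply/key_uniq_fc/key_uniq_redeem.
Qed.

Lemma cset_C0 : is_cset (C0 R).
Proof. by split=> [|c|c c']; rewrite ?inE // => /eqP-> // /eqP->. Qed.

Lemma fCc_C0 : fCc (C0 R) (c0 R) = C0 R.
Proof.
rewrite fCcE (_ : C0 R `\ c0 R = fset0) ?fset0U ?imfset_fset1 ?fc_c0 //.
by apply/fsetP=> x; rewrite !inE andNb.
Qed.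

(* A group that is not [c0] either loses one time step under [fc] or collapses to
   [c0], so [wt] strictly decreases along [fc] until it reaches [0]. *)
Definition wt c : nat := (gT c + (c != c0 R))%N.

Definition depth C : nat := \max_(c <- C) wt c.

Lemma wt_fc x : (wt (fc x) <= (0 < gv x)%R * gT x)%N.
Proof.
case: (fcP x) => [->|[vx tx _ fx]]; first by rewrite /wt eqxx addn0.
have fx0 : fc x != c0 R by rewrite fx; apply/eqP=> -[v0]; move: vx; rewrite v0 ltxx.
by rewrite /wt fx0 {1}fx vx mul1n addn1 prednK.
Qed.

Lemma wt_pos_gT x : ((0 < gv x)%R * gT x <= (wt x).-1)%N.
Proof.
have [vx|] := ltP 0 (gv x); last by rewrite mul0n.
have x0 : x != c0 R by apply/eqP=> x0; move: vx; rewrite x0 ltxx.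
by rewrite /wt x0 mul1n addn1.
Qed.

Lemma depth_fCc C c : c \in C -> (depth (fCc C c) <= (depth C).-1)%N.
Proof.
have wt_le y : y \in C -> ((0 < gv y)%R * gT y <= (depth C).-1)%N.
  by move=> yC; rewrite (leq_trans (wt_pos_gT y)) // -!subn1 leq_sub2r // leq_bigmax_seq.
move=> cC; apply/bigmax_leqP_seq => y + _; rewrite fCcE => /imfsetP[x + ->] /=.
rewrite !inE => /orP[/andP[_ xC]|/eqP->].
  exact: leq_trans (wt_fc _) (wt_le _ xC).
exact: leq_trans (wt_fc (redeem c)) (wt_le _ cC).
Qed.

Lemma depth0_C0 C : is_cset C -> depth C = 0%N -> C = C0 R.
Proof.
case=> c0C _ _ d0; apply/fsetP=> c; rewrite inE; apply/idP/eqP=> [cC|->//].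
have : (wt c <= depth C)%N by exact: leq_bigmax_seq.
by rewrite d0 /wt; case: eqP => // _; rewrite addn1.
Qed.

Lemma cset_ind (Q : {fset group R} -> Prop) :
  Q (C0 R) -> (forall C, is_cset C -> {in C, forall c, Q (fCc C c)} -> Q C) ->
  forall C, is_cset C -> Q C.
Proof.
move=> Q0 QS C; move: {2}(depth C) (leqnn (depth C)) => k; elim: k C => [|k IH] C.
  by rewrite leqn0 => /eqP d0 hC; rewrite (depth0_C0 hC d0).
move=> dC hC; apply: QS => // c cC; apply: IH; last exact: cset_fCc.
by rewrite (leq_trans (depth_fCc cC)) // -subn1 leq_subLR add1n.
Qed.

End CouponSets.

Section MaxValue.
Variable R : realType.
Implicit Types (V : {fset group R} -> R) (C : {fset group R}).

Lemma le_Vc V1 V2 p C : c0 R \in C ->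
  {in C, forall c, V1 (fCc C c) <= V2 (fCc C c)} -> Vc V1 p C <= Vc V2 p C.
Proof.
move=> c0C le12; rewrite /Vc big_seq [leRHS]big_seq.
apply: (big_ind2 (fun a b => a <= b)) => [|*|c cC]; rewrite ?lerD2l ?le12 //.
exact: le_max2.
Qed.

Lemma Vc_C0 V p : V (C0 R) = 0 -> Vc V p (C0 R) = Num.min 0 p.
Proof.
move=> V0; rewrite /Vc fCc_C0 V0 addr0 big_seq.
apply: (big_ind (fun a => a = Num.min 0 p)) => [//|_ _ -> ->|c]; first exact: maxxx.
by rewrite inE => /eqP->; rewrite fCc_C0 V0 addr0.
Qed.

End MaxValue.

Section GainInequalities.
Variable R : realDomainType.

Lemma take_if_u_le_gain (u s l s0 l0 : R) : l <= s -> l0 <= s0 ->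
  (0 <= u)%R%:R * (l - l0) <= Num.max (u + s - s0) 0 - Num.max u 0 + (s0 - l0).
Proof. by move=> *; case: (leP 0 u); case: (leP 0 (u + s - s0)) => /= *; lra. Qed.

Lemma gain_le_take_if_gain (u s v s0 v0 : R) : s <= v -> s0 <= v0 ->
  Num.max (u + s - s0) 0 - Num.max u 0 <= (0 <= u + s - s0)%R%:R * (v - v0) + (v0 - s0).
Proof. by move=> *; case: (leP 0 u); case: (leP 0 (u + s - s0)) => /= *; lra. Qed.

Lemma le_convex_step (lam a b x y : R) : 0 <= lam <= 1 -> a <= b ->
  x <= y + (b - a) -> a + lam * x <= b + lam * y.
Proof. by case/andP=> l0 l1 ab /(ler_wpM2l l0); nra. Qed.

End GainInequalities.

Section ProbabilityIntegral.
Variables (R : realType) (d : measure_display) (T : measurableType d).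
Variable mu : {measure set T -> \bar R}.
Hypothesis mu1 : mu setT = 1%E.

Lemma integrable_cst1 (c : R) : mu.-integrable setT (fun _ => c%:E).
Proof.
apply/integrableP; split; first exact: measurable_cst.
by rewrite integral_cst //= mu1 mule1 ltry.
Qed.

Lemma Rintegral_cst1 (c : R) : Rintegral mu setT (fun _ => c) = c.
Proof. by rewrite Rintegral_cst // mu1 mulr1. Qed.

Lemma Rintegral_subr (f : T -> R) (c : R) : mu.-integrable setT (EFin \o f) ->
  Rintegral mu setT (fun x => f x - c) = Rintegral mu setT f - c.
Proof. by move=> intf; rewrite RintegralB ?Rintegral_cst1 //; apply: integrable_cst1. Qed.

Lemma le_Rintegral_addr (f g : T -> R) (c : R) :
  mu.-integrable setT (EFin \o f) -> mu.-integrable setT (EFin \o g) ->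
  (forall x, f x <= g x + c) ->
  Rintegral mu setT f <= Rintegral mu setT g + c.
Proof.
move=> intf intg fg; have intgc : mu.-integrable setT (EFin \o (fun x => g x + c)).
  by apply: eq_integrable (integrableD _ intg (integrable_cst1 c)) => //= x _.
rewrite -[c in leRHS]Rintegral_cst1 -RintegralD //; last exact: integrable_cst1.
exact: le_Rintegral.
Qed.

End ProbabilityIntegral.

Lemma Rintegral_nonneg_support (R : realType) (mu : {measure set R -> \bar R}) (f : R -> R) :
  mu [set p | p < 0]%classic = 0%E -> mu.-integrable setT (EFin \o f) ->
  (forall p, 0 <= p -> f p = 0) -> Rintegral mu setT f = 0.
Proof.
move=> neg0 /integrableP[mf _] f0; rewrite /Rintegral (ae_eq_integral (cst 0%E)) //.
- by rewrite integral0.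
- exists [set p | p < 0]%classic; split => //.
    have -> : [set p : R | p < 0]%classic = `]-oo, 0[%classic.
      by apply/seteqP; split=> p /=; rewrite in_itv.
    exact: measurable_itv.
  by move=> p /= fp; rewrite ltNge; apply/negP => /f0 fp0; apply: fp => _; rewrite fp0.
Qed.

Section BellmanSandwich.
Variables (R : realType) (d : measure_display) (Tx : measurableType d).
Variables (P : probability Tx R) (K : R.-pker Tx ~> R) (u : Tx -> R) (lam : R).
Hypothesis lam01 : 0 <= lam <= 1.

Local Notation EK x g := (Rintegral (K x) setT g).
Local Notation gain S S0 :=
  (fun x => Num.max (u x + EK x S - S0) 0 - Num.max (u x) 0).

Lemma bellman_lower_step (S L : R -> R) (S0 L0 : R) :
  (forall x, (K x).-integrable setT (EFin \o S)) ->
  (forall x, (K x).-integrable setT (EFin \o L)) ->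
  P.-integrable setT (EFin \o gain S S0) ->
  P.-integrable setT (EFin \o fun x => (0 <= u x)%R%:R * EK x (fun p => L p - L0)) ->
  (forall p, L p <= S p) -> L0 <= S0 ->
  L0 + lam * Rintegral P setT (fun x => (0 <= u x)%R%:R * EK x (fun p => L p - L0))
  <= S0 + lam * Rintegral P setT (gain S S0).
Proof.
move=> intS intL intG intT LS L0S0; apply: le_convex_step => //.
apply: (le_Rintegral_addr _ intT intG) => [|x]; first exact: probability_setT.
rewrite Rintegral_subr ?prob_kernel //; apply: take_if_u_le_gain => //.
exact: le_Rintegral.
Qed.

Lemma bellman_upper_step (S U : R -> R) (S0 U0 : R) :
  (forall x, (K x).-integrable setT (EFin \o S)) ->
  (forall x, (K x).-integrable setT (EFin \o U)) ->
  P.-integrable setT (EFin \o gain S S0) ->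
  P.-integrable setT
    (EFin \o fun x => (0 <= u x + EK x S - S0)%R%:R * EK x (fun p => U p - U0)) ->
  (forall p, S p <= U p) -> S0 <= U0 ->
  S0 + lam * Rintegral P setT (gain S S0)
  <= U0 + lam * Rintegral P setT
       (fun x => (0 <= u x + EK x S - S0)%R%:R * EK x (fun p => U p - U0)).
Proof.
move=> intS intU intG intT SU S0U0; apply: le_convex_step => //.
apply: (le_Rintegral_addr _ intG intT) => [|x]; first exact: probability_setT.
rewrite Rintegral_subr ?prob_kernel //; apply: gain_le_take_if_gain => //.
exact: le_Rintegral.
Qed.

End BellmanSandwich.

Theorem proposition2 (R : realType) (d : measure_display) (Tx : measurableType d)
  (P : probability Tx R) (K : R.-pker Tx ~> R)
  (u : Tx -> R) (lam : R) (Vs VL VU : {fset group R} -> R) :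
  0 <= lam <= 1 ->
  measurable_fun setT u ->
  (* realized fares are nonnegative *)
  (forall x, K x ([set p : R | p < 0])%classic = 0%E) ->
  let EK := fun (x : Tx) (g : R -> R) => Rintegral (K x) setT g in
  let ind := fun (C : {fset group R}) (x : Tx) =>
    ((0 <= u x + EK x (fun p => Vc Vs p C) - Vs (fC C))%R)%:R : R in
  let Exp := fun (C : {fset group R}) (g : R -> R) =>
    lam * Rintegral P setT (fun x => ind C x * EK x g) in
  (* all expectations below are finite *)
  (forall C, is_cset C -> forall x,
     (K x).-integrable setT (fun p => (Vc Vs p C)%:E) /\
     (K x).-integrable setT (fun p => (Vc VL p C)%:E) /\
     (K x).-integrable setT (fun p => (Vc VU p C)%:E)) ->
  (forall C, is_cset C ->
     [/\ P.-integrable setT (fun x => (Num.max (u x + EK x (fun p => Vc Vs p C) - Vs (fC C)) 0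
                                       - Num.max (u x) 0)%:E),
         P.-integrable setT (fun x => (ind (C0 R) x * EK x (fun p => Vc VL p C - VL (fC C)))%:E) &
         P.-integrable setT (fun x => (ind C x * EK x (fun p => Vc VU p C - VU (fC C)))%:E)]) ->
  (* Bellman equation for V* *)
  (forall C, is_cset C ->
     Vs C = Vs (fC C) + lam * Rintegral P setT (fun x =>
        Num.max (u x + EK x (fun p => Vc Vs p C) - Vs (fC C)) 0 - Num.max (u x) 0)) ->
  Vs (C0 R) = 0 ->
  (* lower bound recursion *)
  VL (C0 R) = 0 ->
  (forall C, is_cset C ->
     VL C = VL (fC C) + Exp (C0 R) (fun p => Vc VL p C - VL (fC C))) ->
  (* upper bound recursion *)
  VU (C0 R) = 0 ->
  (forall C, is_cset C ->
     VU C = VU (fC C) + Exp C (fun p => Vc VU p C - VU (fC C))) ->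
  forall C, is_cset C -> VL C <= Vs C <= VU C.
Proof.
move=> lam01 _ Kneg EK ind Exp intK intP HVs Vs0 VL0 HVL VU0 HVU.
have ind0 : ind (C0 R) = fun x => (0 <= u x)%R%:R.
  apply/funext=> x; rewrite /ind /EK /fC fCc_C0 Vs0 subr0.
  rewrite (Rintegral_nonneg_support (Kneg x) (intK _ (cset_C0 R) x).1) ?addr0 // => p p0.
  by rewrite Vc_C0 // min_l.
apply: cset_ind; first by rewrite Vs0 VL0 VU0 lexx.
move=> C hC IH; have c0C : c0 R \in C by case: hC.
have /andP[VL_fC VU_fC] := IH _ c0C.
have intS x := (intK C hC x).1; have intL x := (intK C hC x).2.1; have intU x := (intK C hC x).2.2.
case: (intP C hC); rewrite ind0 => intG intTL intTU.
rewrite (HVs C hC) (HVL C hC) (HVU C hC) /Exp ind0; apply/andP; split.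
- apply: bellman_lower_step => // p; apply: le_Vc => // c /IH /andP[] //.
- apply: bellman_upper_step => // p; apply: le_Vc => // c /IH /andP[] //.
Qed.
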